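(* Let $f(x)$ be a real polynomial of degree $3$ with three distinct real roots $x_1,x_2,x_3$, and let $k_1,k_2,k_3$ be the vertical lines $x=x_1$, $x=x_2$, $x=x_3$ in the coordinate plane. Then there exists an equilateral triangle $A_1A_2A_3$ with $A_i\in k_i$ for $i=1,2,3$. Moreover, for any such equilateral triangle, with inscribed circle $\omega$, the two vertical lines tangent to $\omega$ are exactly the lines $x=c$ where $c$ ranges over the two critical points (local extrema) of $f$, and the vertical line through the center of $\omega$ is the line $x=c_0$ where $c_0$ is the inflection point of $f$ (the root of $f''$).
   Context: Work in the real coordinate plane; ''vertical'' means parallel to the ordinate axis. *)

From HB Require Import structures.
From mathcomp Require Import all_boot all_order all_algebra.
Set Implicit Arguments. Unset Strict Implicit. Unset Printing Implicit Defensive.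
Import Order.TTheory GRing.Theory Num.Theory.
Local Open Scope ring_scope.

Definition point (R : rcfType) := (R * R)%type.

Definition dist (R : rcfType) (P Q : point R) : R :=
  Num.sqrt ((P.1 - Q.1) ^+ 2 + (P.2 - Q.2) ^+ 2).

Definition equilateral (R : rcfType) (A1 A2 A3 : point R) : Prop :=
  A1 <> A2 /\ dist A1 A2 = dist A2 A3 /\ dist A2 A3 = dist A3 A1.

Definition incenter (R : rcfType) (A1 A2 A3 : point R) : point R :=
  let a := dist A2 A3 in let b := dist A3 A1 in let c := dist A1 A2 in
  ((a * A1.1 + b * A2.1 + c * A3.1) / (a + b + c),
   (a * A1.2 + b * A2.2 + c * A3.2) / (a + b + c)).

(* inradius = 2 * area / perimeter *)
Definition inradius (R : rcfType) (A1 A2 A3 : point R) : R :=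
  let a := dist A2 A3 in let b := dist A3 A1 in let c := dist A1 A2 in
  `|(A2.1 - A1.1) * (A3.2 - A1.2) - (A3.1 - A1.1) * (A2.2 - A1.2)| / (a + b + c).

Definition on_circle (R : rcfType) (O : point R) (r : R) (P : point R) : Prop :=
  (P.1 - O.1) ^+ 2 + (P.2 - O.2) ^+ 2 = r ^+ 2.

Definition vertical_tangent (R : rcfType) (O : point R) (r : R) (t : R) : Prop :=
  exists! y : R, on_circle O r (t, y).

From HB Require Import structures.
From mathcomp Require Import all_boot all_order all_algebra.
From mathcomp Require Import ring.
Set Implicit Arguments. Unset Strict Implicit. Unset Printing Implicit Defensive.
Import Order.TTheory GRing.Theory Num.Theory.
Local Open Scope ring_scope.

(** A cubic with roots x1, x2, x3 is c (X - x1)(X - x2)(X - x3), so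
    its inflection point is the mean s/3 of the roots (s = x1 + x2 + x3), and its
    critical points t are given by 2 (3t - s)^2 = D, where
    D = (x1 - x2)^2 + (x2 - x3)^2 + (x3 - x1)^2.  On the other hand, the incenter
    of an equilateral triangle of side d is its centroid and its inradius is
    d / (2 sqrt 3); projecting the three sides on the x-axis gives 2 D = 3 d^2,
    which turns the tangency condition (t - s/3)^2 = d^2 / 12 into the same
    equation 2 (3t - s)^2 = D. *)

Lemma poly_prod_roots (R : fieldType) (f : {poly R}) (rs : seq R) :
  size f = (size rs).+1 -> uniq rs -> all (root f) rs ->
  f = lead_coef f *: \prod_(x <- rs) ('X - x%:P).
Proof.
move=> size_f uniq_rs roots_f; rewrite -uniq_rootsE in uniq_rs.
have [q def_f] := uniq_roots_prod_XsubC roots_f uniq_rs.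
have q_neq0 : q != 0.
  by apply: contra_eq_neq def_f => ->; rewrite mul0r -size_poly_eq0 size_f.
have size_q : size q = 1%N.
  move: size_f; rewrite def_f size_Mmonic ?monic_prod_XsubC // size_prod_XsubC.
  by rewrite addnS /= -addn1 addnC => /addnI.
rewrite def_f [q]size1_polyC ?size_q // lead_coefM lead_coefC.
by rewrite (monicP (monic_prod_XsubC _ _ _)) mulr1 mul_polyC.
Qed.

Section DerivativesOfCubic.
Variables (R : comNzRingType) (x1 x2 x3 : R).
Let P : {poly R} := ('X - x1%:P) * ('X - x2%:P) * ('X - x3%:P).

Lemma horner_deriv_cubic (t : R) :
  6 * P^`().[t] =
    2 * (3 * t - (x1 + x2 + x3)) ^+ 2 - ((x1 - x2) ^+ 2 + (x2 - x3) ^+ 2 + (x3 - x1) ^+ 2).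
Proof.
rewrite /P !derivM !derivXsubC.
by rewrite !(hornerM, hornerD, hornerN, hornerX, hornerC); ring.
Qed.

Lemma horner_deriv2_cubic (t : R) : P^`(2).[t] = 2 * (3 * t - (x1 + x2 + x3)).
Proof.
rewrite /P derivnS derivn1 !derivM !derivXsubC !mul1r !mulr1 !(derivXsubC, derivM, derivD).
by rewrite !(hornerM, hornerD, hornerN, hornerX, hornerC); ring.
Qed.

End DerivativesOfCubic.

Section CubicWithThreeRoots.
Variables (R : numFieldType) (f : {poly R}) (x1 x2 x3 : R).
Hypotheses (size_f : size f = 4%N) (x12 : x1 != x2) (x23 : x2 != x3) (x13 : x1 != x3).
Hypotheses (fx1 : root f x1) (fx2 : root f x2) (fx3 : root f x3).

Let c := lead_coef f.
Let P : {poly R} := ('X - x1%:P) * ('X - x2%:P) * ('X - x3%:P).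

Let c_neq0 : c != 0.
Proof. by rewrite lead_coef_eq0 -size_poly_eq0 size_f. Qed.

Let f_prod : f = c *: P.
Proof.
rewrite {1}(@poly_prod_roots _ f [:: x1; x2; x3]) ?size_f //=.
  by rewrite !big_cons big_nil mulr1 mulrA.
by rewrite !inE negb_or x12 x23 x13.
by rewrite fx1 fx2 fx3.
Qed.

Lemma root_deriv_cubic (t : R) :
  root f^`() t =
    (2 * (3 * t - (x1 + x2 + x3)) ^+ 2 == (x1 - x2) ^+ 2 + (x2 - x3) ^+ 2 + (x3 - x1) ^+ 2).
Proof.
rewrite /root f_prod derivZ hornerZ mulf_eq0 (negPf c_neq0) /=.
by rewrite -[_ == _ + _]subr_eq0 -horner_deriv_cubic mulf_eq0 pnatr_eq0.
Qed.

Lemma root_deriv2_cubic : root f^`(2) ((x1 + x2 + x3) / 3).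
Proof.
rewrite /root f_prod derivnZ hornerZ horner_deriv2_cubic.
by rewrite [3 * _]mulrC divfK ?pnatr_eq0 // subrr !mulr0.
Qed.

End CubicWithThreeRoots.

Section EquilateralAlgebra.
Variables (R : idomainType) (p q u v L : R).
Hypotheses (pq : p ^+ 2 + q ^+ 2 = L) (uv : u ^+ 2 + v ^+ 2 = L).
Hypothesis pquv : (p - u) ^+ 2 + (q - v) ^+ 2 = L.

Lemma dot_equilateral : 2 * (p * u + q * v) = L.
Proof.
have -> : 2 * (p * u + q * v) = p ^+ 2 + q ^+ 2 + (u ^+ 2 + v ^+ 2) - ((p - u) ^+ 2 + (q - v) ^+ 2).
  by ring.
by rewrite pq uv pquv; ring.
Qed.

Lemma sqr_cross_equilateral : 4 * (p * v - u * q) ^+ 2 = 3 * L ^+ 2.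
Proof.
have -> : 4 * (p * v - u * q) ^+ 2 =
    4 * ((p ^+ 2 + q ^+ 2) * (u ^+ 2 + v ^+ 2)) - (2 * (p * u + q * v)) ^+ 2 by ring.
by rewrite pq uv dot_equilateral; ring.
Qed.

(* Expand L (2 (p^2 + (p - u)^2 + u^2) - 3 L) and trade L - p^2, L - u^2 and
   L - 2 p u for q^2, v^2 and 2 q v: what remains is (2 q v)^2 - 4 q^2 v^2. *)
Lemma sum_sqr_diff_equilateral :
  L != 0 -> 2 * (p ^+ 2 + (p - u) ^+ 2 + u ^+ 2) = 3 * L.
Proof.
move=> L_neq0.
have q2 : L - p ^+ 2 = q ^+ 2 by rewrite -pq; ring.
have v2 : L - u ^+ 2 = v ^+ 2 by rewrite -uv; ring.
have qv : L - 2 * (p * u) = 2 * (q * v) by rewrite -dot_equilateral; ring.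
have : L * (2 * (p ^+ 2 + (p - u) ^+ 2 + u ^+ 2) - 3 * L) = 0.
  have -> : L * (2 * (p ^+ 2 + (p - u) ^+ 2 + u ^+ 2) - 3 * L) =
      (L - 2 * (p * u)) ^+ 2 - 4 * (L - p ^+ 2) * (L - u ^+ 2) by ring.
  by rewrite q2 v2 qv; ring.
by move/eqP; rewrite mulf_eq0 (negPf L_neq0) subr_eq0 => /eqP.
Qed.

End EquilateralAlgebra.

Section EquilateralGeometry.
Variable R : rcfType.
Implicit Types (P Q O : point R) (r t : R).

Lemma sqr_dist P Q : dist P Q ^+ 2 = (P.1 - Q.1) ^+ 2 + (P.2 - Q.2) ^+ 2.
Proof. by rewrite sqr_sqrtr // addr_ge0 // sqr_ge0. Qed.

Lemma dist_gt0 P Q : P <> Q -> 0 < dist P Q.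
Proof.
move=> PQ; rewrite sqrtr_gt0 lt0r addr_ge0 ?sqr_ge0 // andbT.
rewrite paddr_eq0 ?sqr_ge0 // !sqrf_eq0 !subr_eq0.
by apply/negP => /andP[/eqP e1 /eqP e2]; apply: PQ; move: P Q e1 e2 => [? ?] [? ?] /= -> ->.
Qed.

(* The reflection of a point of the circle in the horizontal diameter is again on it. *)
Lemma vertical_tangentE O r t : vertical_tangent O r t <-> (t - O.1) ^+ 2 = r ^+ 2.
Proof.
rewrite /vertical_tangent /on_circle /=; split.
  case=> y [Oy uniq_y].
  have Oy' : (t - O.1) ^+ 2 + ((2 * O.2 - y) - O.2) ^+ 2 = r ^+ 2 by rewrite -Oy; ring.
  have y_sym : y - (2 * O.2 - y) = 0 by rewrite -(uniq_y _ Oy') subrr.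
  have : 2 * (y - O.2) = 0 by rewrite -y_sym; ring.
  by move/eqP; rewrite mulf_eq0 pnatr_eq0 subr_eq0 => /eqP yO; rewrite -Oy yO subrr expr0n addr0.
move=> tO; exists O.2; split; first by rewrite subrr expr0n addr0.
move=> y; rewrite tO => /eqP.
by rewrite -subr_eq0 addrAC subrr add0r sqrf_eq0 subr_eq0 eq_sym => /eqP.
Qed.

Lemma equilateral_on_vertical_lines (x1 x2 x3 : R) : x1 != x2 ->
  exists A1 A2 A3 : point R, equilateral A1 A2 A3 /\ A1.1 = x1 /\ A2.1 = x2 /\ A3.1 = x3.
Proof.
move=> x12; set s := Num.sqrt (3 : R).
have s2 : s ^+ 2 = 3 by rewrite sqr_sqrtr // ler0n.
(* A3 is the image of A2 under the rotation by 60 degrees about A1. *)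
exists (x1, 0), (x2, ((x2 - x1) - 2 * (x3 - x1)) / s),
  (x3, (2 * (x2 - x1) - (x3 - x1)) / s).
split; last by [].
split; first by case=> e; rewrite e eqxx in x12.
by split; congr Num.sqrt; rewrite /= ?sub0r ?sqrrN ?subr0 -?mulrBl !expr_div_n s2; field.
Qed.

Section Equilateral.
Variables A1 A2 A3 : point R.
Hypothesis eqA : equilateral A1 A2 A3.

Let d := dist A1 A2.

Let d_gt0 : 0 < d.
Proof. by case: eqA => /dist_gt0. Qed.

Let dist23 : dist A2 A3 = d.
Proof. by case: eqA => _ [e12 _]; rewrite /d e12. Qed.

Let dist31 : dist A3 A1 = d.
Proof. by case: eqA => _ [e12 e23]; rewrite /d e12 e23. Qed.

Let side12 : (A2.1 - A1.1) ^+ 2 + (A2.2 - A1.2) ^+ 2 = d ^+ 2.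
Proof. by rewrite sqr_dist; ring. Qed.

Let side13 : (A3.1 - A1.1) ^+ 2 + (A3.2 - A1.2) ^+ 2 = d ^+ 2.
Proof. by rewrite -dist31 sqr_dist; ring. Qed.

Let side23 :
  ((A2.1 - A1.1) - (A3.1 - A1.1)) ^+ 2 + ((A2.2 - A1.2) - (A3.2 - A1.2)) ^+ 2 = d ^+ 2.
Proof. by rewrite -dist23 sqr_dist; ring. Qed.

Lemma equilateral_sum_sqr_abscissae :
  2 * ((A1.1 - A2.1) ^+ 2 + (A2.1 - A3.1) ^+ 2 + (A3.1 - A1.1) ^+ 2) = 3 * d ^+ 2.
Proof.
rewrite -(sum_sqr_diff_equilateral side12 side13 side23) ?sqrf_eq0 ?gt_eqF //.
by ring.
Qed.

Lemma equilateral_incenter :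
  incenter A1 A2 A3 = ((A1.1 + A2.1 + A3.1) / 3, (A1.2 + A2.2 + A3.2) / 3).
Proof.
rewrite /incenter dist23 dist31 -/d.
by congr (_, _); field; rewrite gt_eqF // !addr_gt0.
Qed.

Lemma equilateral_sqr_inradius : inradius A1 A2 A3 ^+ 2 = d ^+ 2 / 12.
Proof.
rewrite /inradius dist23 dist31 -/d expr_div_n real_normK ?num_real //.
have cross := sqr_cross_equilateral side12 side13 side23.
rewrite [_ ^+ 2](_ : _ = 3 * (d ^+ 2) ^+ 2 / 4); last by rewrite -cross; field.
by field; rewrite gt_eqF // !addr_gt0.
Qed.

Lemma equilateral_vertical_tangent t :
  vertical_tangent (incenter A1 A2 A3) (inradius A1 A2 A3) t <->
  2 * (3 * t - (A1.1 + A2.1 + A3.1)) ^+ 2 =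
    (A1.1 - A2.1) ^+ 2 + (A2.1 - A3.1) ^+ 2 + (A3.1 - A1.1) ^+ 2.
Proof.
rewrite vertical_tangentE equilateral_sqr_inradius equilateral_incenter /=.
set s := A1.1 + A2.1 + A3.1; set D := _ + _ + (A3.1 - A1.1) ^+ 2.
have d2 : d ^+ 2 = 2 * D / 3 by rewrite equilateral_sum_sqr_abscissae; field.
have key : (t - s / 3) ^+ 2 - d ^+ 2 / 12 = (2 * (3 * t - s) ^+ 2 - D) / 18.
  by rewrite d2; field.
split => tangent_t.
  have : (2 * (3 * t - s) ^+ 2 - D) / 18 = 0 by rewrite -key tangent_t subrr.
  by move/eqP; rewrite mulf_eq0 invr_eq0 pnatr_eq0 orbF subr_eq0 => /eqP.
by apply/eqP; rewrite -subr_eq0 key tangent_t subrr mul0r.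
Qed.

End Equilateral.

End EquilateralGeometry.

Theorem mainTheorem1 (R : rcfType) (f : {poly R}) (x1 x2 x3 : R) :
  size f = 4%N ->
  x1 != x2 -> x2 != x3 -> x1 != x3 ->
  root f x1 -> root f x2 -> root f x3 ->
  (exists A1 A2 A3 : point R,
      equilateral A1 A2 A3 /\ A1.1 = x1 /\ A2.1 = x2 /\ A3.1 = x3) /\
  (forall A1 A2 A3 : point R,
      equilateral A1 A2 A3 -> A1.1 = x1 -> A2.1 = x2 -> A3.1 = x3 ->
      (forall t : R,
          vertical_tangent (incenter A1 A2 A3) (inradius A1 A2 A3) t
          <-> root f^`() t) /\
      root f^`(2) (incenter A1 A2 A3).1).
Proof.
move=> size_f x12 x23 x13 fx1 fx2 fx3.
split; first exact: equilateral_on_vertical_lines.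
move=> A1 A2 A3 eqA A1x1 A2x2 A3x3; subst x1 x2 x3; split.
  move=> t; rewrite equilateral_vertical_tangent //.
  by rewrite (root_deriv_cubic size_f x12 x23 x13 fx1 fx2 fx3); split => /eqP.
rewrite equilateral_incenter //.
exact: (root_deriv2_cubic size_f x12 x23 x13 fx1 fx2 fx3).
Qed.
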